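(* Let $\tilde L$ be a minimum-size counterexample. Then every element $x\in\tilde L\setminus\{0_{\tilde L},1_{\tilde L}\}$ is comparable with at least four elements of $\tilde L\setminus\{x\}$.
   Context: For a poset $P$, $x$ upper covers $y$ if $y<x$ with nothing strictly between; join-irreducible: upper covers exactly one element. For $x\in P$, ${\uparrow}x=\{y: x\le y\}$. $0_{\tilde L}$ and $1_{\tilde L}$ denote the least and greatest elements. A counterexample is a finite lattice $L$ with $|L|>1$ in which every join-irreducible $j$ satisfies $|{\uparrow}j|>|L|/2$; a minimum-size counterexample is a counterexample $\tilde L$ such that no counterexample has fewer elements. *)

From mathcomp Require Import all_boot all_order.
Set Implicit Arguments. Unset Strict Implicit. Unset Printing Implicit Defensive.
Import Order.Theory.
Local Open Scope order_scope.

Definition ucovers (d : Order.disp_t) (P : finPOrderType d) (x y : P) : bool :=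
  (y < x) && [forall z : P, ~~ ((y < z) && (z < x))].

Definition join_irr (d : Order.disp_t) (P : finPOrderType d) (j : P) : bool :=
  #|[set y : P | ucovers j y]| == 1%N.

Definition upset (d : Order.disp_t) (P : finPOrderType d) (x : P) : {set P} :=
  [set y : P | x <= y].

(* Counterexample: finite lattice with |L| > 1, every join-irreducible j has
   |up j| > |L|/2  (stated as 2 |up j| > |L| in nat). *)
Definition counterexample (d : Order.disp_t) (L : finTBLatticeType d) : Prop :=
  (1 < #|L|)%N /\ forall j : L, join_irr j -> (#|L| < 2 * #|upset j|)%N.

Definition min_counterexample (d : Order.disp_t) (L : finTBLatticeType d) : Prop :=
  counterexample L /\
  forall (d' : Order.disp_t) (L' : finTBLatticeType d'),
    counterexample L' -> (#|L| <= #|L'|)%N.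

From mathcomp Require Import all_boot all_order.
From mathcomp Require Import zify.
Set Implicit Arguments. Unset Strict Implicit. Unset Printing Implicit Defensive.
Import Order.Theory.
Local Open Scope order_scope.

(* Suppose x, strictly between bottom and top of a counterexample L, is
   comparable with at most one element y besides bottom and top.  The top of L
   is not join-irreducible, its up-set being a singleton, so for every w < top
   some z < top is not below w.  If y is not strictly between x and top, the
   strict down-set of x has a maximum, so x is join-irreducible with up-set
   {x, top}, forcing |L| <= 3; yet bottom, x, top and a z < top not below x are
   four elements.  If x < y < top, then x is an atom with up-set {x, y, top}, so
   |L| <= 5; a z < top not below y is incomparable with x, hence the only such
   element, so z is an atom with up-set {z, top}, forcing |L| <= 3 although L
   has five elements. *)

Definition comparables (d : Order.disp_t) (P : finPOrderType d) (x : P) :=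
  [set y : P | (y != x) && (x >=< y)].

Definition incomparables (d : Order.disp_t) (P : finPOrderType d) (x : P) :=
  [set y : P | ~~ (x >=< y)].

Lemma card_comparables_incomparables (d : Order.disp_t) (P : finPOrderType d)
    (x : P) :
  #|P| = (#|comparables x| + #|incomparables x|).+1.
Proof.
have -> : incomparables x = ~: [set y | x >=< y] by apply/setP => y; rewrite !inE.
rewrite -(cardsC [set y | x >=< y]) (cardsD1 x) inE comparablexx.
have -> : [set y | x >=< y] :\ x = comparables x by apply/setP => y; rewrite !inE.
by rewrite addSn.
Qed.

Lemma cards3 (T : finType) (a b c : T) :
  a != b -> a != c -> b != c -> #|[set a; b; c]| = 3.
Proof.
move=> ab ac bc.
have -> : [set a; b; c] = a |: [set b; c] by apply/setP => w; rewrite !inE orbA.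
by rewrite cardsU1 cards2 !inE negb_or ab ac bc.
Qed.

Lemma subset_set3_of_card_le3 (T : finType) (A : {set T}) (a b : T) :
  a != b -> a \in A -> b \in A -> (#|A| <= 3)%N ->
  exists c, A \subset [set a; b; c].
Proof.
move=> ab aA bA leA3.
have [/set0Pn[c cR] | R0] := boolP (A :\ a :\ b != set0); last first.
  exists a; apply/subsetP => w wA; rewrite !inE.
  have [//|wa] := eqVneq w a; have [//|wb] := eqVneq w b.
  by move: R0; rewrite negbK => /eqP/setP/(_ w); rewrite !inE wa wb wA.
have bA' : b \in A :\ a by rewrite !inE eq_sym ab.
have cardR : (#|A :\ a :\ b| <= 1)%N.
  by move: leA3; rewrite (cardsD1 a A) aA (cardsD1 b (A :\ a)) bA'.
exists c; apply/subsetP => w wA; rewrite !inE.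
have [//|wa] := eqVneq w a; have [//|wb] := eqVneq w b.
by rewrite (card_le1_eqP cardR w c) ?eqxx ?orbT // !inE wa wb.
Qed.

Lemma join_irr_max_below (d : Order.disp_t) (P : finPOrderType d) (j w : P) :
  w < j -> (forall z, z < j -> z <= w) -> join_irr j.
Proof.
move=> wj max_w; rewrite /join_irr.
have -> : [set y | ucovers j y] = [set w].
  apply/setP => y; rewrite !inE /ucovers; apply/idP/idP.
  - case/andP=> yj /forallP/(_ w); rewrite wj andbT => yw.
    by move: (max_w _ yj); rewrite le_eqVlt (negbTE yw) orbF.
  - move/eqP->; rewrite wj; apply/forallP => z; apply/negP => /andP[wz zj].
    by move: (max_w _ zj); rewrite lt_geF.
by rewrite cards1.
Qed.

Section Counterexample.
Variables (d : Order.disp_t) (L : finTBLatticeType d).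
Hypothesis ce : counterexample L.

Lemma counterexample_card_lt (j : L) (A : {set L}) :
  join_irr j -> upset j \subset A -> (#|L| < 2 * #|A|)%N.
Proof.
move=> jj /subset_leq_card upA; apply: (leq_trans (ce.2 j jj)).
by rewrite leq_mul2l upA orbT.
Qed.

Lemma counterexample_top_reducible (w : L) :
  w < \top -> exists2 z : L, z < \top & ~~ (z <= w).
Proof.
move=> w1; have [/exists_inP[z z1 zw] | /exists_inPn below] :=
  boolP [exists z in [pred z : L | z < \top], ~~ (z <= w)].
  by exists z.
have upset1 : upset (\top : L) \subset [set \top].
  by apply/subsetP => y; rewrite !inE le1x.
have top_irr : join_irr (\top : L).
  by apply: (join_irr_max_below w1) => z /below; rewrite negbK.
by have := counterexample_card_lt top_irr upset1; rewrite cards1; move: ce.1; lia.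
Qed.

Variable x : L.
Hypotheses (x_neq0 : x != \bot) (x_neq1 : x != \top).

Lemma bot_lt_x : \bot < x. Proof. by rewrite lt0x. Qed.
Lemma x_lt_top : x < \top. Proof. by rewrite ltx1. Qed.
Lemma bot_lt_top : \bot < (\top : L). Proof. exact: lt_trans bot_lt_x x_lt_top. Qed.

Lemma bot_in_comparables : \bot \in comparables x.
Proof. by rewrite inE eq_sym x_neq0 ge_comparable ?le0x. Qed.

Lemma top_in_comparables : \top \in comparables x.
Proof. by rewrite inE eq_sym x_neq1 le_comparable ?lex1. Qed.

Lemma two_le_card_comparables : (2 <= #|comparables x|)%N.
Proof.
have bot_top : [set \bot; \top] \subset comparables x.
  by rewrite !subUset !sub1set bot_in_comparables top_in_comparables.
by apply: leq_trans (subset_leq_card bot_top); rewrite cards2 (lt_eqF bot_lt_top).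
Qed.

Variable y : L.
Hypothesis few_comparables : comparables x \subset [set \bot; \top; y].

Lemma few_comparables_mem (w : L) : x >=< w -> w \in [set x; \bot; \top; y].
Proof.
have [-> _ | wx xw] := eqVneq w x; first by rewrite !inE eqxx.
have : w \in comparables x by rewrite inE wx xw.
by move/(subsetP few_comparables); rewrite !inE -!orbA => ->; rewrite orbT.
Qed.

Lemma few_comparables_join_irr : join_irr x.
Proof.
apply: (join_irr_max_below (w := if y < x then y else \bot)).
  by case: ifP => // _; exact: bot_lt_x.
move=> z zx; have := few_comparables_mem (ge_comparable (ltW zx)).
rewrite !inE -!orbA => /or4P[] /eqP zE; rewrite zE ?le0x // in zx *.
- by rewrite ltxx in zx.
- by rewrite lt1x in zx.
- by rewrite zx.
Qed.

Lemma few_comparables_upset : upset x \subset [set x; y; \top].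
Proof.
apply/subsetP => w; rewrite !inE => xw.
move: (few_comparables_mem (le_comparable xw)); rewrite !inE -!orbA => /or4P[] /eqP wE;
  rewrite wE ?eqxx ?orbT // in xw *.
by rewrite lex0 (negbTE x_neq0) in xw.
Qed.

Lemma few_comparables_between : x < y < \top.
Proof.
apply/negPn/negP => y_not_between.
have upx : upset x \subset [set x; \top].
  apply/subsetP => w xw; move: (subsetP few_comparables_upset w xw); rewrite !inE -orbA.
  case/or3P => /eqP wE; rewrite wE ?eqxx ?orbT //; rewrite inE wE in xw.
  move: y_not_between; rewrite lt_neqAle xw ltx1 andbT.
  by case/nandP => /negPn/eqP->; rewrite eqxx ?orbT.
have [z z1 zx] := counterexample_top_reducible x_lt_top.
have z_incomp : z \in incomparables x.
  rewrite inE; apply/negP => xz; move: (few_comparables_mem xz).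
  rewrite !inE -!orbA => /or4P[] /eqP zE; rewrite zE ?lexx ?le0x ?ltxx // in xz zx z1.
  by move: y_not_between; rewrite z1 andbT (comparable_ltNge xz) zx.
have incomp_pos : (0 < #|incomparables x|)%N by apply/card_gt0P; exists z.
have four_le_L : (4 <= #|L|)%N.
  by rewrite (card_comparables_incomparables x) ltnS (leq_add two_le_card_comparables incomp_pos).
have := leq_ltn_trans four_le_L (counterexample_card_lt few_comparables_join_irr upx).
by rewrite cards2 (lt_eqF x_lt_top).
Qed.

Section Between.
Hypotheses (xy : x < y) (y1 : y < \top).

Lemma card_comparables_between : #|comparables x| = 3.
Proof.
have bot_top_y : [set \bot; \top; y] \subset comparables x.
  rewrite !subUset !sub1set bot_in_comparables top_in_comparables.
  by rewrite inE gt_eqF // le_comparable // ltW.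
rewrite -(@cards3 _ \bot \top y) ?(lt_eqF bot_lt_top) ?(lt_eqF (lt_trans bot_lt_x xy))
  ?(gt_eqF y1) //.
by apply/eqP; rewrite eqn_leq !subset_leq_card.
Qed.

Lemma card_incomparables_between : (#|incomparables x| <= 1)%N.
Proof.
have := counterexample_card_lt few_comparables_join_irr few_comparables_upset.
rewrite (card_comparables_incomparables x) card_comparables_between.
by rewrite cards3 ?(lt_eqF xy) ?(lt_eqF x_lt_top) ?(lt_eqF y1) //; lia.
Qed.

Lemma few_comparables_between_absurd : False.
Proof.
have [z z1 zy] := counterexample_top_reducible y1.
have z_incomp : z \in incomparables x.
  rewrite inE; apply/negP => /few_comparables_mem; rewrite !inE -!orbA => /or4P[] /eqP zE;
    rewrite zE ?lexx ?le0x ?ltxx // in zy z1.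
  by rewrite (ltW xy) in zy.
have incomp_eq_z w : ~~ (x >=< w) -> w = z.
  by move=> xw; apply: (card_le1_eqP card_incomparables_between); rewrite // inE.
have z_atom w : w < z -> w <= \bot.
  move=> wz; have [xw | /incomp_eq_z wE] := boolP (x >=< w); last by rewrite wE ltxx in wz.
  move: (few_comparables_mem xw); rewrite !inE -!orbA => /or4P[] /eqP wE;
    rewrite wE ?lexx // in wz *.
  - by move: z_incomp; rewrite inE le_comparable // ltW.
  - by rewrite lt1x in wz.
  - by move: z_incomp; rewrite inE le_comparable // ltW // (lt_trans xy wz).
have upz : upset z \subset [set z; \top].
  apply/subsetP => w; rewrite !inE => zw.
  have [xw | /incomp_eq_z ->] := boolP (x >=< w); last by rewrite eqxx.
  move: (few_comparables_mem xw); rewrite !inE -!orbA => /or4P[] /eqP wE;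
    rewrite wE ?eqxx ?orbT // in zw *.
  - by move: z_incomp; rewrite inE ge_comparable.
  - by rewrite (le_trans zw (le0x y)) in zy.
  - by rewrite zw in zy.
have z_irr : join_irr z.
  apply: (join_irr_max_below _ z_atom); rewrite lt0x.
  by apply: contraTneq z_incomp => ->; rewrite inE ge_comparable ?le0x.
have := counterexample_card_lt z_irr upz.
rewrite (card_comparables_incomparables x) card_comparables_between cards2 (lt_eqF z1).
have : (0 < #|incomparables x|)%N by apply/card_gt0P; exists z.
by lia.
Qed.

End Between.

Lemma few_comparables_absurd : False.
Proof.
by case/andP: few_comparables_between; exact: few_comparables_between_absurd.
Qed.

End Counterexample.

Theorem mainTheorem12 (d : Order.disp_t) (L : finTBLatticeType d) :
  min_counterexample L ->
  forall x : L, x != \bot -> x != \top ->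
    (4 <= #|[set y : L | (y != x) && (x >=< y)]|)%N.
Proof.
move=> [ce _] x x0 x1; rewrite -/(comparables x) leqNgt ltnS; apply/negP => few.
have [y few_y] := subset_set3_of_card_le3 (A := comparables x)
  (negbT (lt_eqF (bot_lt_top x0 x1))) (bot_in_comparables x0) (top_in_comparables x1) few.
apply: (few_comparables_absurd ce x0 x1 (y := y)); exact: few_y.
Qed.
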